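(* Let $n$ be a positive integer and $s\ge 64n$. There exists a subset of $\{0,1\}^s$ of size $2^n$ such that $\sum_{i=1}^s a_i(1-b_i)\ge s/8$ for any two different elements $a=(a_1,\dots,a_s)$ and $b=(b_1,\dots,b_s)$ of the subset. *)

From mathcomp Require Import all_boot.
Set Implicit Arguments. Unset Strict Implicit. Unset Printing Implicit Defensive.

Definition asym_dist (s : nat) (a b : {ffun 'I_s -> bool}) : nat :=
  \sum_(i < s) (nat_of_bool (a i) * (1 - nat_of_bool (b i))).

From mathcomp Require Import all_boot zify.
Set Implicit Arguments. Unset Strict Implicit. Unset Printing Implicit Defensive.

(** Put m = s/2. A greedy (Gilbert-Varshamov) choice gives 2^n words of {0,1}^m
    at pairwise Hamming distance > m/4, because a Hamming ball of radius r has at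
    most 3^m / 2^(m-r) points: summing 2^(number of agreements with x) over all
    y gives 3^m. The map x |-> (x, complement of x, 0, ..., 0) then turns Hamming
    distance into the asymmetric distance: each coordinate where x and y differ
    contributes exactly one pair a_i = 1, b_i = 0, in one of the two halves. *)

Lemma leq_card_bigcup (I T : finType) (P : pred I) (F : I -> {set T}) :
  #|\bigcup_(i | P i) F i| <= \sum_(i | P i) #|F i|.
Proof.
elim/big_rec2: _ => [|i k U _ leUk]; first by rewrite cards0.
exact: leq_trans (leq_card_setU _ _) (leq_add (leqnn _) leUk).
Qed.

Section GreedyClique.

Variables (T : finType) (R : rel T).
Hypotheses (R_sym : symmetric R) (R_irr : irreflexive R).

Definition is_clique (S : {set T}) := {in S &, forall a b, a != b -> R a b}.

Lemma clique_setU1 (S : {set T}) y :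
  is_clique S -> y \notin \bigcup_(x in S) [set z | ~~ R x z] -> is_clique (y |: S).
Proof.
move=> cliqueS /bigcupP yR.
have R_yS x : x \in S -> R x y.
  by move=> xS; apply/negPn/negP => nRxy; apply: yR; exists x; rewrite ?inE.
move=> a b /setU1P[->|aS] /setU1P[->|bS]; rewrite ?eqxx // => ab.
- by rewrite R_sym R_yS.
- exact: R_yS.
- exact: cliqueS.
Qed.

Lemma exists_clique_of_small_balls N :
  0 < #|T| -> (forall x, #|[set y | ~~ R x y]| * N <= #|T|) ->
  exists S : {set T}, #|S| = N /\ is_clique S.
Proof.
move=> T_gt0 small_balls.
suff clique_of_card k : k <= N -> exists S : {set T}, #|S| = k /\ is_clique S.
  exact: clique_of_card.
elim: k => [_|k IHk ltkN].
  by exists set0; split=> [|a]; rewrite ?cards0 ?inE.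
have [S [cardS cliqueS]] := IHk (ltnW ltkN).
set U := \bigcup_(x in S) [set z | ~~ R x z].
have ltUT : #|U| < #|T|.
  rewrite -(ltn_pmul2r (leq_ltn_trans (leq0n k) ltkN)).
  apply: leq_ltn_trans (_ : k * #|T| < _); last by rewrite [_ * N]mulnC ltn_pmul2r.
  apply: leq_trans (leq_mul (leq_card_bigcup _ _) (leqnn N)) _.
  by rewrite big_distrl /= -cardS -sum_nat_const leq_sum.
have [y yU] : exists y, y \notin U.
  apply/existsP; apply: contraTT ltUT => /existsPn U_full.
  by rewrite -leqNgt subset_leq_card //; apply/subsetP => x _; rewrite -[x \in U]negbK.
have yS : y \notin S.
  by apply: contra yU => yS; apply/bigcupP; exists y; rewrite ?inE ?R_irr.
by exists (y |: S); rewrite cardsU1 yS cardS; split=> //; apply: clique_setU1.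
Qed.

End GreedyClique.

Definition hamming m (x y : {ffun 'I_m -> bool}) : nat := \sum_(k < m) (x k != y k).

Section Hamming.

Variable m : nat.
Implicit Types x y : {ffun 'I_m -> bool}.

Lemma hammingC x y : hamming x y = hamming y x.
Proof. by apply: eq_bigr => k _; rewrite eq_sym. Qed.

Lemma hammingxx x : hamming x x = 0.
Proof. by apply: big1 => k _; rewrite eqxx. Qed.

Lemma subn_hamming x y : m - hamming x y = \sum_(k < m) (x k == y k).
Proof.
have split_m : hamming x y + \sum_(k < m) (x k == y k) = m.
  rewrite -big_split /= -[m in RHS]card_ord -sum1_card.
  by apply: eq_bigr => k _; case: (x k == y k).
by rewrite -{1}split_m addKn.
Qed.

Lemma sum_exp2_agreements x : \sum_y 2 ^ (m - hamming x y) = 3 ^ m.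
Proof.
under eq_bigr do rewrite subn_hamming expn_sum.
rewrite -(bigA_distr_bigA (fun k b => 2 ^ (x k == b))) /= -[m in RHS]card_ord -prod_nat_const.
by apply: eq_bigr => k _; rewrite big_bool; case: (x k).
Qed.

Lemma card_hamming_ball x r : #|[set y | hamming x y <= r]| * 2 ^ (m - r) <= 3 ^ m.
Proof.
rewrite -(sum_exp2_agreements x) -sum_nat_const big_mkcond /=.
apply: leq_sum => y _; rewrite inE; case: ifP => // le_hr.
by rewrite leq_pexp2l // leq_sub2l.
Qed.

End Hamming.

Lemma exp3_mul_exp2_le_exp4 k m : 8 * k <= 3 * m -> 3 ^ m * 2 ^ k <= 4 ^ m.
Proof.
move=> le_km; rewrite -(@leq_exp2r _ _ 8) // expnMn -!expnM.
have -> : 4 ^ (m * 8) = 2 ^ (13 * m) * 2 ^ (3 * m).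
  by rewrite -expnD -(expnM 2 2); congr (2 ^ _); lia.
rewrite [_ ^ (m * 8)]expnM (mulnC 13) [2 ^ (m * 13)]expnM.
apply: leq_mul; last by rewrite leq_exp2l // mulnC.
have exp8_le : 3 ^ 8 <= 2 ^ 13 by [].
rewrite expnAC [X in _ <= X]expnAC.
case: m {le_km} => [|m]; first exact: leqnn.
by rewrite leq_exp2r.
Qed.

Lemma exists_hamming_code m n : 32 * n <= m ->
  exists S : {set {ffun 'I_m -> bool}},
    #|S| = 2 ^ n /\ {in S &, forall a b, a != b -> m %/ 4 < hamming a b}.
Proof.
move=> le_nm; set d := m %/ 4.
apply: (@exists_clique_of_small_balls _ (fun x y => d < hamming x y)).
- by move=> x y; rewrite /= hammingC.
- by move=> x; rewrite /= hammingxx.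
- by rewrite card_ffun card_bool card_ord expn_gt0.
move=> x; rewrite card_ffun card_bool card_ord.
have -> : [set y | ~~ (d < hamming x y)] = [set y | hamming x y <= d].
  by apply/setP => y; rewrite !inE ltnNge negbK.
have le_dm : d <= m by apply: leq_div.
rewrite -(@leq_pmul2r (2 ^ m)) ?expn_gt0 //.
apply: leq_trans (_ : 3 ^ m * 2 ^ (n + d) <= _); last first.
  by rewrite -expnMn exp3_mul_exp2_le_exp4 // /d; lia.
have -> : 2 ^ m = 2 ^ (m - d) * 2 ^ d by rewrite -expnD subnK.
rewrite expnD !mulnA (mulnAC _ (2 ^ n)).
by rewrite !leq_mul2r card_hamming_ball !orbT.
Qed.

Section TwinCode.

Variable m : nat.
Implicit Types x y : {ffun 'I_m -> bool}.

Definition bit_at x (j : nat) : bool := if insub j is Some k then x k else false.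

Definition twin_bit x (i : nat) : bool :=
  if i < m then bit_at x i else if i < m + m then ~~ bit_at x (i - m) else false.

Definition twin_code s x : {ffun 'I_s -> bool} := [ffun i : 'I_s => twin_bit x i].

Lemma bit_atE x (k : 'I_m) : bit_at x k = x k.
Proof. by rewrite /bit_at valK. Qed.

Lemma twin_bit_low x (k : 'I_m) : twin_bit x k = x k.
Proof. by rewrite /twin_bit ltn_ord bit_atE. Qed.

Lemma twin_bit_high x (k : 'I_m) : twin_bit x (k + m) = ~~ x k.
Proof. by rewrite /twin_bit ltnNge leq_addl ltn_add2r ltn_ord addnK bit_atE. Qed.

Lemma twin_bit_pad x i : m + m <= i -> twin_bit x i = false.
Proof. by move=> le_i; rewrite /twin_bit !ltnNge le_i (leq_trans (leq_addr m m) le_i). Qed.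

Lemma twin_code_inj s : m <= s -> injective (twin_code s).
Proof.
move=> le_ms x y /ffunP eq_codes; apply/ffunP => k.
by have := eq_codes (widen_ord le_ms k); rewrite !ffunE /= !twin_bit_low.
Qed.

Lemma asym_dist_twin_code s x y : m + m <= s ->
  asym_dist (twin_code s x) (twin_code s y) = hamming x y.
Proof.
move=> le_2m_s; rewrite /asym_dist /hamming.
under eq_bigr do rewrite !ffunE.
rewrite -(big_mkord xpredT (fun i => twin_bit x i * (1 - twin_bit y i))).
rewrite (big_cat_nat (leq0n (m + m)) le_2m_s) (big_cat_nat (leq0n m) (leq_addr m m)) /=.
have padding0 : \sum_(m + m <= i < s) twin_bit x i * (1 - twin_bit y i) = 0.
  by rewrite big_nat_cond big1 // => i /andP[/andP[le_i _] _]; rewrite twin_bit_pad.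
rewrite padding0 addn0.
rewrite (big_addn 0 _ m) addnK !big_mkord -big_split /=.
by apply: eq_bigr => k _; rewrite !twin_bit_low !twin_bit_high; case: (x k); case: (y k).
Qed.

End TwinCode.

Theorem lemma3 (n s : nat) (hn : 0 < n) (hs : 64 * n <= s) :
  exists S : {set {ffun 'I_s -> bool}},
    #|S| = 2 ^ n /\
    (forall a b, a \in S -> b \in S -> a != b -> s <= 8 * asym_dist a b).
Proof.
have le_n_half : 32 * n <= s %/ 2 by lia.
have [S [cardS codeS]] := exists_hamming_code le_n_half.
exists (twin_code s @: S); split.
  by rewrite card_imset //; apply: twin_code_inj; lia.
move=> _ _ /imsetP[x xS ->] /imsetP[y yS ->] neq_codes.
have neq_xy : x != y by apply: contraNneq neq_codes => ->.
rewrite asym_dist_twin_code; last by lia.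
by have := codeS x y xS yS neq_xy; lia.
Qed.
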